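(* For every word $w$ of positive integers and every $k\ge1$, $P(w)|_{[k]}=P(w|_{[k]})$.
   Context: $[k]=\{1,\dots,k\}$. For a tableau $T$ and set $I$, $T|_I$ is obtained by deleting all boxes whose labels are not in $I$; $w|_I$ is obtained from the word $w$ by deleting all letters not in $I$. Shifted shapes: for a strict partition $\lambda$, boxes $(i,j)$ with $i\le j\le i+\lambda_i-1$; boxes $(i,i)$ form the main diagonal. Increasing shifted tableau: entries strictly increase along rows and down columns. Shifted Hecke insertion of $x$ into an increasing shifted tableau $T$: first insert $x$ into row 1. When $x$ is inserted into a row (resp. column): (i) if $x$ is weakly larger than all entries and adjoining a box containing $x$ at the end of that row (resp. column) gives an increasing shifted tableau, do so and stop (adjoining to an empty row $i$ means adding box $(i,i)$); (ii) if $x$ is weakly larger than all entries but adjoining fails to give an increasing shifted tableau, leave the tableau unchanged and stop; (iii) otherwise let $y$ be the smallest entry strictly larger than $x$ there; replace $y$ by $x$ if the result is increasing, otherwise change nothing; in either case $y$ is output: if $x$ was inserted into a column or $y$ lies on the main diagonal, $y$ is inserted into the next column to the right (all subsequent outputs go into successive columns), otherwise into the next row below. $P(w)=(\cdots(\emptyset\leftarrow w_1)\cdots)\leftarrow w_n$. *)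

From mathcomp Require Import all_boot.
Set Implicit Arguments. Unset Strict Implicit. Unset Printing Implicit Defensive.

(* A shifted tableau is stored as its list of rows; row i (0-indexed) occupies
   the columns i, i+1, ..., i + size (row i) - 1 (so the first box of each
   row lies on the main diagonal). Rows and columns are 0-indexed. *)
Definition tableau := seq (seq nat).

Definition row (T : tableau) (i : nat) : seq nat := nth [::] T i.

Definition get (T : tableau) (i j : nat) : option nat :=
  if i <= j then
    let r := row T i in
    if j - i < size r then Some (nth 0 r (j - i)) else None
  else None.

Definition shifted_shape (T : tableau) : bool :=
  all (fun r => 0 < size r) T && sorted (fun a b => b < a) (map size T).

Definition opt_gt (o : option nat) (x : nat) : bool :=
  if o is Some y then x < y else true.

Definition increasing (T : tableau) : bool :=
  all (fun i => all (fun j =>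
         match get T i j with
         | Some x => opt_gt (get T i j.+1) x && opt_gt (get T i.+1 j) x
         | None => true
         end) (iota i (size (row T i)))) (iota 0 (size T)).

Definition valid (T : tableau) : bool := shifted_shape T && increasing T.

Definition set_box (T : tableau) (i j x : nat) : tableau :=
  if i < size T then
    let r := row T i in
    if (i <= j) && (j - i <= size r) then set_nth [::] T i (set_nth 0 r (j - i) x)
    else T
  else if (i == size T) && (j == i) then rcons T [:: x] else T.

Inductive target := InRow of nat | InCol of nat.

(* One run of shifted Hecke insertion, with fuel (always sufficient). *)
Fixpoint hstep (fuel : nat) (T : tableau) (t : target) (x : nat) : tableau :=
  match fuel with
  | 0 => T
  | f.+1 =>
    match t with
    | InRow i =>
      let r := row T i in
      if all (fun y => y <= x) r then
        let T' := set_box T i (i + size r) x in if valid T' then T' else T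
      else
        let k := find (fun y => x < y) r in
        let y := nth 0 r k in
        let j := i + k in
        let T' := set_box T i j x in
        let T1 := if valid T' then T' else T in
        hstep f T1 (if j == i then InCol i.+1 else InRow i.+1) y
    | InCol j =>
      let c := pmap (fun i => omap (fun v => (i, v)) (get T i j)) (iota 0 (size T)) in
      if all (fun p => p.2 <= x) c then
        let m := if c is [::] then 0 else (last (0, 0) c).1.+1 in
        let T' := set_box T m j x in if valid T' then T' else T
      else
        let p := nth (0, 0) c (find (fun p => x < p.2) c) in
        let T' := set_box T p.1 j x in
        let T1 := if valid T' then T' else T in
        hstep f T1 (InCol j.+1) p.2
    end
  end.

Definition hecke_insert (T : tableau) (x : nat) : tableau :=
  hstep (2 * sumn (map size T) + 5) T (InRow 0) x.

Definition P (w : seq nat) : tableau := foldl hecke_insert [::] w.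

Definition restrict_word (w : seq nat) (k : nat) : seq nat := [seq a <- w | a <= k].

Definition restrict_get (T : tableau) (k i j : nat) : option nat :=
  match get T i j with
  | Some x => if (1 <= x <= k) then Some x else None
  | None => None
  end.

From mathcomp Require Import all_boot zify.
Set Implicit Arguments. Unset Strict Implicit. Unset Printing Implicit Defensive.

(* Restriction to [k] commutes with every insertion step. A letter x > k only
   bumps letters larger than x, so it never touches the boxes labelled in [k].
   For x <= k, since T is increasing, each row and column of T|_[k] is the
   prefix of the corresponding row or column of T made of letters <= k. So the
   insertions of x into T and into T|_[k] bump the same letters from the same
   boxes, until T bumps a letter larger than k from the very box in which
   T|_[k] appends x; from there on T only moves letters larger than k. It
   remains that a single write of a letter <= k yields an increasing shifted
   tableau in T exactly when it does in T|_[k]: its left and upper neighbours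
   are smaller, hence visible in the restriction, and the constraints towards
   the right and below are inherited from the letter it replaces. *)

(** * Boxes and validity *)

Lemma onth_if (A : Type) (x0 : A) (s : seq A) p :
  onth s p = if p < size s then Some (nth x0 s p) else None.
Proof.
rewrite onthE; case: ltnP => hp; last by rewrite nth_default ?size_map.
by rewrite (nth_map x0).
Qed.

Lemma get_row (T : tableau) i p :
  get T i (i + p) = if p < size (row T i) then Some (nth 0 (row T i) p) else None.
Proof. by rewrite /get leq_addr addKn. Qed.

Lemma get_defined (T : tableau) a b :
  get T a b <> None -> a <= b /\ b - a < size (row T a).
Proof. by rewrite /get; case: ifP => // ab; case: ifP. Qed.

Lemma get_default (T : tableau) a b : size T <= a -> get T a b = None.
Proof. by move=> h; rewrite /get /row nth_default //; case: ifP. Qed.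

Lemma get_size (T : tableau) a b : get T a b <> None -> a < size T.
Proof. by case: (ltnP a (size T)) => // /get_default ->. Qed.

Local Notation grid := (nat -> nat -> option nat).

Definition left_closed (g : grid) :=
  forall a b b', g a b <> None -> a <= b' <= b -> g a b' <> None.
Definition up_closed (g : grid) := forall a b, g a.+1 b <> None -> g a b <> None.
Definition grid_increasing (g : grid) :=
  forall a b v, g a b = Some v -> opt_gt (g a b.+1) v /\ opt_gt (g a.+1 b) v.

Lemma eq_left_closed g1 g2 : g1 =2 g2 -> left_closed g1 <-> left_closed g2.
Proof. by move=> e; split=> h a b b'; [rewrite -!e | rewrite !e]; apply: h. Qed.
Lemma eq_up_closed g1 g2 : g1 =2 g2 -> up_closed g1 <-> up_closed g2.
Proof. by move=> e; split=> h a b; [rewrite -!e | rewrite !e]; apply: h. Qed.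
Lemma eq_grid_increasing g1 g2 : g1 =2 g2 -> grid_increasing g1 <-> grid_increasing g2.
Proof. by move=> e; split=> h a b v; [rewrite -!e | rewrite !e]; apply: h. Qed.

Lemma left_closed_get T : left_closed (get T).
Proof.
move=> a b b' /get_defined [ab lt] /andP [h1 h2]; rewrite /get h1.
by have -> : b' - a < size (row T a) by lia.
Qed.

Definition rows_nonempty (T : tableau) := forall a, a < size T -> 0 < size (row T a).

Lemma rows_nonemptyP T : rows_nonempty T <-> forall a, a < size T -> get T a a <> None.
Proof.
have gE a : get T a a = if 0 < size (row T a) then Some (nth 0 (row T a) 0) else None.
  by rewrite -{2}[a]addn0 get_row.
by split => H a /H; rewrite gE; case: ifP.
Qed.

Lemma increasingP T : reflect (grid_increasing (get T)) (increasing T).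
Proof.
apply: (iffP idP) => [/allP H a b v E | H].
  have [ab lt] : a <= b /\ b - a < size (row T a) by apply: get_defined; rewrite E.
  have aI : a \in iota 0 (size T) by rewrite mem_iota (get_size (b := b)) ?E.
  have bI : b \in iota a (size (row T a)) by rewrite mem_iota; lia.
  by have /allP/(_ b bI) := H a aI; rewrite E => /andP.
apply/allP => a _; apply/allP => b _.
by case E: (get T a b) => [v|] //; have [-> ->] := H _ _ _ E.
Qed.

Lemma validP T :
  valid T <-> [/\ rows_nonempty T, up_closed (get T) & grid_increasing (get T)].
Proof.
rewrite /valid /shifted_shape.
have NEP : reflect (rows_nonempty T) (all (fun r => 0 < size r) T).
  by apply: (iffP (all_nthP [::])) => H a /H.
split.
- move=> /andP [/andP [/NEP ne so] /increasingP inc]; split => // a b h.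
  have [ab lt] := get_defined h.
  have aT := get_size h.
  move/(sortedP 0): so => /(_ a); rewrite size_map => /(_ aT).
  rewrite !(nth_map [::]) //; last lia.
  rewrite /get; have -> : a <= b by lia.
  by rewrite /row in lt * => hh; have -> : b - a < size (nth [::] T a) by lia.
- move=> [ne co /increasingP ->]; rewrite andbT; apply/andP; split; first exact/NEP.
  apply/(sortedP 0) => a; rewrite size_map => aT.
  rewrite !(nth_map [::]) //; last lia.
  have pos := ne _ aT; set m := size (row T a.+1) in pos *.
  have last_box : get T a.+1 (a.+1 + m.-1) <> None by rewrite get_row ltn_predL pos.
  have := co _ _ last_box; rewrite addSnnS prednK // get_row.
  by case: ifP => // ->.
Qed.

(** * Writing a box *)

Definition settable (T : tableau) i j :=
  ((i < size T) && (i <= j) && (j - i <= size (row T i))) || ((i == size T) && (j == i)).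

Lemma set_box_id T i j x : ~~ settable T i j -> set_box T i j x = T.
Proof.
rewrite /settable /set_box negb_or => /andP [h1 h2].
case: ifP => hi; first by move: h1; rewrite hi /= => /negbTE ->.
by move: h2 => /negbTE ->.
Qed.

Lemma settable_le T i j : settable T i j -> i <= j.
Proof. by rewrite /settable => /orP [/andP [/andP [_ ->]]| /andP [_ /eqP ->]]. Qed.

Lemma get_set_box T i j x a b : settable T i j ->
  get (set_box T i j x) a b = if (a == i) && (b == j) then Some x else get T a b.
Proof.
rewrite /settable /set_box => /orP [/andP [/andP [hi hij] hs]| /andP [/eqP hi /eqP hj]].
  rewrite hi hij hs /get /row nth_set_nth /=.
  case: (eqVneq a i) => [->|ne] //=.
  rewrite size_set_nth nth_set_nth /=.
  case: (eqVneq b j) => [->|nb] /=.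
    by rewrite hij eqxx; have -> : j - i < maxn (j - i).+1 (size (nth [::] T i)) by lia.
  case: ifP => // ib.
  have -> : (b - i == j - i) = false by apply/negbTE/eqP; lia.
  move: hs; rewrite /row => hs.
  case: (ltnP (b - i) (size (nth [::] T i))) => h.
    by have -> : b - i < maxn (j - i).+1 (size (nth [::] T i)) by lia.
  by have -> : b - i < maxn (j - i).+1 (size (nth [::] T i)) = false by lia.
subst; rewrite ltnn !eqxx /get /row nth_rcons.
case: (ltngtP a (size T)) => ha //=.
- by rewrite (nth_default [::]) ?(ltnW ha) //=; case: ifP.
- subst a; rewrite (nth_default [::]) //.
  case: (eqVneq b (size T)) => [->|nb] /=; first by rewrite leqnn subnn.
  by case: ifP => // h; have -> : b - size T < 1 = false by lia.
Qed.

Lemma size_set_box T i j x :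
  size (set_box T i j x) = if (i == size T) && (j == i) then (size T).+1 else size T.
Proof.
rewrite /set_box; case: ifP => hi.
  have -> : (i == size T) = false by lia.
  by case: ifP => //= _; rewrite size_set_nth; lia.
by case: ifP => //; rewrite size_rcons.
Qed.

Lemma rows_nonempty_set_box T i j x :
  rows_nonempty T -> settable T i j -> rows_nonempty (set_box T i j x).
Proof.
move=> /rows_nonemptyP ne ap; apply/rows_nonemptyP => a.
rewrite size_set_box get_set_box //.
case: (eqVneq a i) => [ea|na]; case: (eqVneq a j) => [eb|nb] //=; subst.
- by case: ifP => h aT; apply: ne; lia.
- by case: ifP => h aT; apply: ne; lia.
- case: ifP => [/andP [/eqP h1 /eqP h2]|h] aT; first by subst; apply: ne; lia.
  by apply: ne; lia.
Qed.

Lemma settableP T i j : rows_nonempty T ->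
  (settable T i j <-> i <= j /\
    (get T i j <> None \/ (i < j /\ get T i j.-1 <> None) \/
     (j = i /\ (i = 0 \/ get T i.-1 i.-1 <> None)))).
Proof.
move=> ne; split.
- move=> ap; split; first exact: (settable_le ap).
  move: ap; rewrite /settable => /orP [/andP [/andP [hi hij] hs]| /andP [/eqP hi /eqP hj]].
    case: (ltnP (j - i) (size (row T i))) => h; first by left; rewrite /get hij h.
    right; left; have := ne i hi; split; first lia.
    rewrite /get; have -> : i <= j.-1 by lia.
    by have -> : j.-1 - i < size (row T i) by lia.
  right; right; split => //.
  case: i hi {hj} => [|i] hi; [by left|right].
  by have := proj1 (rows_nonemptyP T) ne i; rewrite -hi => /(_ (ltnSn _)).
- move=> [ij [h|[[h1 h2]|[h1 [h2|h2]]]]].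
  + have [_ lt] := get_defined h.
    by rewrite /settable (get_size h) ij /=; have -> : j - i <= size (row T i) by lia.
  + have [_ lt] := get_defined h2.
    by rewrite /settable (get_size h2) ij /=; have -> : j - i <= size (row T i) by lia.
  + by subst; rewrite /settable /= subnn leq0n eqxx andbT; case: (size T).
  + subst j; have iT := get_size h2.
    rewrite /settable ij subnn leq0n eqxx !andbT.
    by case: (ltngtP i (size T)) => //; lia.
Qed.

(** * Restriction of a single write *)

(* Unlike restrict_get, this keeps the letter 0, which never occurs in P w. *)
Definition restrict_grid k (g : grid) a b :=
  if g a b is Some v then (if v <= k then Some v else None) else None.
Definition grid_set (g : grid) i j x a b :=
  if (a == i) && (b == j) then Some x else g a b.

Lemma restrict_grid_set k g i j x :
  x <= k -> restrict_grid k (grid_set g i j x) =2 grid_set (restrict_grid k g) i j x.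
Proof. by move=> xk a b; rewrite /restrict_grid /grid_set; case: ifP; rewrite ?xk. Qed.

Lemma up_closed_restrict k g :
  up_closed g -> grid_increasing g -> up_closed (restrict_grid k g).
Proof.
move=> co ic a b; rewrite /restrict_grid.
case E: (g a.+1 b) => [v|] //; case: ifP => // vk _.
case E2: (g a b) => [u|]; last by have := co a b; rewrite E E2; apply.
have [_ ] := ic _ _ _ E2; rewrite E /= => uv.
by have -> : u <= k by lia.
Qed.

Lemma grid_increasing_restrict k g :
  grid_increasing g -> grid_increasing (restrict_grid k g).
Proof.
move=> ic a b v; rewrite /restrict_grid.
case E: (g a b) => [u|] //; case: ifP => // uk [<-].
have [h1 h2] := ic _ _ _ E.
split; first by case: (g a b.+1) h1 => [w|] //= h; case: ifP.
by case: (g a.+1 b) h2 => [w|] //= h; case: ifP.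
Qed.

Lemma up_closed_set g i j x : up_closed g ->
  (forall a, a.+1 = i -> g a j <> None) -> up_closed (grid_set g i j x).
Proof.
move=> co above a b; rewrite /grid_set.
case: (eqVneq a i) => [->|na] /=.
  by case: (eqVneq b j) => //= nb; rewrite andbF; apply: co.
case: (eqVneq a.+1 i) => [ea|na1] /=; last exact: co.
by case: (eqVneq b j) => [-> _|nb] /=; [apply: above | apply: co].
Qed.

Lemma grid_increasing_set g i j x :
  left_closed g -> up_closed g -> grid_increasing g -> i <= j -> opt_gt (g i j) x ->
  (forall b v, b.+1 = j -> g i b = Some v -> v < x) ->
  (forall a v, a.+1 = i -> g a j = Some v -> v < x) ->
  grid_increasing (grid_set g i j x).
Proof.
move=> lc co ic ij gx left above a b v; rewrite /grid_set.
have ni : (i.+1 == i) = false by lia.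
have nj : (j.+1 == j) = false by lia.
case: (eqVneq a i) => [->|na]; case: (eqVneq b j) => [->|nb] /=.
- move=> [<-]; rewrite ni nj /=; split.
    case E: (g i j) gx => [y|] /= gx.
      by have [] := ic _ _ _ E; case: (g i j.+1) => [w|] //=; lia.
    case E2: (g i j.+1) => [w|] //=.
    by exfalso; apply: (lc i j.+1 j); rewrite ?E2 ?E //; lia.
  case E2: (g i.+1 j) => [w|] //=.
  case E: (g i j) gx => [y|] /= gx; first by have [_] := ic _ _ _ E; rewrite E2 /=; lia.
  by exfalso; apply: (co i j); rewrite ?E2 ?E.
- move=> gv; have [h1 h2] := ic _ _ _ gv; rewrite ni; split => //=.
  by case: (eqVneq b.+1 j) => [eb|] //=; apply: (left b).
- move=> gv; have [h1 h2] := ic _ _ _ gv; rewrite andbT; split => //=.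
  by case: (eqVneq a.+1 i) => [ea|] //=; apply: (above a).
- by move=> gv; rewrite andbF; apply: ic.
Qed.

Section RestrictedNeighbours.
Variables (k : nat) (T : tableau) (i j x : nat).
Hypothesis xk : x <= k.
Let h := restrict_grid k (grid_set (get T) i j x).
Hypotheses (h_left : left_closed h) (h_up : up_closed h) (h_inc : grid_increasing h).

Let h_ij : h i j = Some x.
Proof. by rewrite /h /restrict_grid /grid_set !eqxx /= xk. Qed.

Lemma left_neighbour_lt b v : b.+1 = j -> get T i b = Some v -> v < x.
Proof.
move=> bj gv; have [ib _] := @get_defined T i b ltac:(by rewrite gv).
have : h i b <> None by apply: (@h_left i j b); rewrite ?h_ij //; lia.
have bj' : (b == j) = false by lia.
rewrite /h /restrict_grid /grid_set bj' andbF gv; case: ifP => // vk _.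
have [] := @h_inc i b v; first by rewrite /h /restrict_grid /grid_set bj' andbF gv vk.
by rewrite bj h_ij.
Qed.

Lemma upper_neighbour_defined a : a.+1 = i -> get T a j <> None.
Proof.
move=> ai; have : h a j <> None by apply: h_up; rewrite ai h_ij.
have ai' : (a == i) = false by lia.
by rewrite /h /restrict_grid /grid_set ai' /=; case: (get T a j).
Qed.

Lemma upper_neighbour_lt a v : a.+1 = i -> get T a j = Some v -> v < x.
Proof.
move=> ai gv; have : h a j <> None by apply: h_up; rewrite ai h_ij.
have ai' : (a == i) = false by lia.
rewrite /h /restrict_grid /grid_set ai' /= gv; case: ifP => // vk _.
have [] := @h_inc a j v; first by rewrite /h /restrict_grid /grid_set ai' /= gv vk.
by rewrite ai h_ij.
Qed.

End RestrictedNeighbours.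

Lemma valid_set_box_restrict k T TR i j x :
  valid T -> rows_nonempty TR -> get TR =2 restrict_grid k (get T) -> x <= k ->
  opt_gt (get T i j) x -> settable T i j -> settable TR i j ->
  valid (set_box T i j x) = valid (set_box TR i j x).
Proof.
move=> /validP [neT coT icT] neR rel xk gx apT apR.
have eT : get (set_box T i j x) =2 grid_set (get T) i j x.
  by move=> a b; rewrite get_set_box.
have eR : get (set_box TR i j x) =2 restrict_grid k (grid_set (get T) i j x).
  by move=> a b; rewrite get_set_box // restrict_grid_set // /grid_set rel.
apply/idP/idP => /validP [_ co ic]; apply/validP; split.
- exact: rows_nonempty_set_box.
- apply/(eq_up_closed eR)/up_closed_restrict.
    exact/(eq_up_closed eT).
  exact/(eq_grid_increasing eT).
- by apply/(eq_grid_increasing eR)/grid_increasing_restrict/(eq_grid_increasing eT).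
- exact: rows_nonempty_set_box.
- have lc := (eq_left_closed eR).1 (@left_closed_get _).
  have co' := (eq_up_closed eR).1 co; have ic' := (eq_grid_increasing eR).1 ic.
  apply/(eq_up_closed eT)/up_closed_set => // a.
  exact: (upper_neighbour_defined xk).
- have lc := (eq_left_closed eR).1 (@left_closed_get _).
  have co' := (eq_up_closed eR).1 co; have ic' := (eq_grid_increasing eR).1 ic.
  apply/(eq_grid_increasing eT)/grid_increasing_set => //.
  + exact: left_closed_get.
  + exact: settable_le apT.
  + by move=> b v; apply: (left_neighbour_lt xk).
  + by move=> a v; apply: (upper_neighbour_lt xk).
Qed.

Lemma settable_of_restrict k T TR i j :
  rows_nonempty T -> rows_nonempty TR -> get TR =2 restrict_grid k (get T) ->
  settable TR i j -> settable T i j.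
Proof.
move=> neT neR rel /(settableP i j neR) apR; apply/(settableP i j neT).
have RtoT a b : get TR a b <> None -> get T a b <> None.
  by rewrite rel /restrict_grid; case: (get T a b).
case: apR => ij [h|[[h1 h2]|[h1 [h2|h2]]]]; split => //.
- by left; apply: RtoT.
- by right; left; split => //; apply: RtoT.
- by right; right; split => //; left.
- by right; right; split => //; right; apply: RtoT.
Qed.

(* The boxes that make (i, j) settable hold letters smaller than x <= k, so they
   survive in the restriction. *)
Lemma settable_restrict_of_valid k T TR i j x :
  rows_nonempty TR -> get TR =2 restrict_grid k (get T) -> x <= k ->
  settable T i j -> valid (set_box T i j x) -> settable TR i j.
Proof.
move=> neR rel xk apT /validP [_ coT' icT'].
have ij := settable_le apT.
have gx' : get (set_box T i j x) i j = Some x by rewrite get_set_box // !eqxx.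
have kept a b v : (a == i) && (b == j) = false ->
    get (set_box T i j x) a b = Some v -> v < x -> get TR a b <> None.
  by move=> nab; rewrite get_set_box // nab rel /restrict_grid => -> vx; rewrite ifT //; lia.
apply/(settableP i j neR); split => //.
case: (ltngtP i j) ij => // [lij|eij] _.
- right; left; split => //.
  have : get (set_box T i j x) i j.-1 <> None.
    by apply: (left_closed_get (b := j)); rewrite ?gx' //; lia.
  case E: (get (set_box T i j x) i j.-1) => [v|] // _.
  have j0 : 0 < j by lia.
  have [] := icT' _ _ _ E; rewrite prednK // gx' /= => vx _.
  by apply: (kept _ _ v) E vx; apply/negbTE; rewrite negb_and; apply/orP; right; lia.
- subst j; right; right; split => //.
  case: i gx' apT kept coT' icT' => [|i] gx' apT kept coT' icT'; [by left | right] => /=.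
  have : get (set_box T i.+1 i.+1 x) i i.+1 <> None by apply: coT'; rewrite gx'.
  case E: (get (set_box T i.+1 i.+1 x) i i.+1) => [u|] // _.
  have [_] := icT' _ _ _ E; rewrite gx' /= => ux.
  have : get (set_box T i.+1 i.+1 x) i i <> None.
    by apply: (left_closed_get (b := i.+1)); rewrite ?E //; lia.
  case E2: (get (set_box T i.+1 i.+1 x) i i) => [w|] // _.
  have [] := icT' _ _ _ E2; rewrite E /= => wu _.
  by apply: (kept _ _ w) E2 _; [rewrite (ltn_eqF (ltnSn i)) | lia].
Qed.

Definition try_set_box T i j x := if valid (set_box T i j x) then set_box T i j x else T.

Lemma valid_try_set_box T i j x : valid T -> valid (try_set_box T i j x).
Proof. by rewrite /try_set_box; case: ifP. Qed.

Lemma restrict_try_set_box k T TR i j x :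
  valid T -> valid TR -> get TR =2 restrict_grid k (get T) -> x <= k ->
  opt_gt (get T i j) x ->
  get (try_set_box TR i j x) =2 restrict_grid k (get (try_set_box T i j x)).
Proof.
move=> vT vTR rel xk gx; have [neT _ _] := (validP T).1 vT; have [neR _ _] := (validP TR).1 vTR.
rewrite /try_set_box; case apR: (settable TR i j); last first.
  rewrite (set_box_id x (negbT apR)) if_same.
  case vT': (valid (set_box T i j x)) => //.
  case apT: (settable T i j); last by rewrite set_box_id ?apT.
  by rewrite (settable_restrict_of_valid neR rel xk apT vT') in apR.
have apT := settable_of_restrict neT neR rel apR.
rewrite -(valid_set_box_restrict vT neR rel xk gx apT apR); case: ifP => // _ a b.
by rewrite /restrict_grid !get_set_box //; case: ifP; rewrite ?xk // rel.
Qed.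

Lemma restrict_try_set_box_large k T i j x : k < x ->
  (forall w, get T i j = Some w -> k < w) ->
  restrict_grid k (get (try_set_box T i j x)) =2 restrict_grid k (get T).
Proof.
move=> kx big a b; rewrite /try_set_box; case: ifP => // _.
case ap: (settable T i j); last by rewrite set_box_id ?ap.
rewrite /restrict_grid get_set_box ?ap //.
case: ifP => // /andP [/eqP -> /eqP ->]; rewrite leqNgt kx.
by case E: (get T i j) => [w|] //; rewrite leqNgt big.
Qed.

Definition positive (T : tableau) := forall a b v, get T a b = Some v -> 0 < v.

Lemma positive_try_set_box T i j x :
  positive T -> 0 < x -> positive (try_set_box T i j x).
Proof.
rewrite /try_set_box => pT x0; case: ifP => // _.
case ap: (settable T i j); last by rewrite set_box_id ?ap.
by move=> a b v; rewrite get_set_box ?ap //; case: ifP => [_ [<-] //|_]; apply: pT.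
Qed.

Lemma shape_try_set_box T a b v : get T a b <> None ->
  size (try_set_box T a b v) = size T /\
  size (row (try_set_box T a b v) 0) = size (row T 0).
Proof.
move=> h; rewrite /try_set_box; case: ifP => // _.
have aT := get_size h; have [ab lt] := get_defined h.
rewrite size_set_box; have -> : (a == size T) = false by lia.
split => //.
rewrite /set_box aT ab andTb; have -> : b - a <= size (row T a) by lia.
case: (eqVneq a 0) => [e|ne].
  subst a; rewrite {1}/row nth_set_nth /= size_set_nth.
  by apply/maxn_idPr; move: lt; rewrite subn0.
by rewrite {1}/row nth_set_nth /= eq_sym (negbTE ne).
Qed.

(** * Rows and columns of a restriction *)

Section BumpInPrefix.
Variables (k x : nat) (s : seq nat).
Hypothesis xk : x <= k.
Let n := find (fun y => k < y) s.
Let prefix := take n s.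

Lemma prefix_all_le : all (fun y => y <= x) s -> prefix = s.
Proof.
move=> le_x; rewrite /prefix /n hasNfind ?take_size // -all_predC.
by apply: sub_all le_x => y /=; rewrite -leqNgt => /leq_trans; apply.
Qed.

Lemma bump_after_prefix :
  ~~ all (fun y => y <= x) s -> all (fun y => y <= x) prefix ->
  find (fun y => x < y) s = size prefix /\ k < nth 0 s (size prefix).
Proof.
move=> na aR.
have ns : n < size s.
  case: (ltnP n (size s)) => // h; move: na; rewrite -(cat_take_drop n s) all_cat aR /=.
  by rewrite drop_oversize.
have hs : has (fun y => k < y) s by rewrite (has_find (fun y => k < y) s).
have szR : size prefix = n by rewrite /prefix size_take ns.
rewrite szR; split; last exact: (nth_find 0 hs).
rewrite -(cat_take_drop n s) find_cat -/prefix.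
have -> : has (fun y => x < y) prefix = false.
  by apply/negbTE; rewrite -all_predC; apply: sub_all aR => y /=; rewrite -leqNgt.
rewrite szR (drop_nth 0 ns) /=.
have := nth_find 0 hs; rewrite -/n => h.
have -> : x < nth 0 s n by lia.
by rewrite addn0.
Qed.

Lemma bump_in_prefix : ~~ all (fun y => y <= x) prefix ->
  find (fun y => x < y) prefix = find (fun y => x < y) s /\
  nth 0 prefix (find (fun y => x < y) prefix) = nth 0 s (find (fun y => x < y) s).
Proof.
move=> na.
have hR : has (fun y => x < y) prefix.
  by rewrite -has_predC in na; apply: sub_has na => y /=; rewrite ltnNge.
have e : find (fun y => x < y) prefix = find (fun y => x < y) s.
  by rewrite -(cat_take_drop n s) find_cat -/prefix hR.
split => //; rewrite -e /prefix nth_take //.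
by move: hR; rewrite has_find /prefix size_take; case: ifP => //; lia.
Qed.

End BumpInPrefix.

Lemma row_sorted T i : grid_increasing (get T) -> sorted ltn (row T i).
Proof.
move=> ic; apply/(sortedP 0) => p lt.
have := get_row T i p; rewrite (ltnW lt) => /ic [].
by rewrite -addnS get_row lt.
Qed.

Lemma row_restrict k T TR i :
  valid T -> get TR =2 restrict_grid k (get T) ->
  row TR i = take (find (fun y => k < y) (row T i)) (row T i).
Proof.
move=> /validP [_ _ ic] rel; have so := row_sorted i ic.
set r := row T i; set n := find _ r.
have nr : n <= size r by apply: find_size.
apply: eq_from_onth => p; rewrite !(onth_if 0) -get_row rel /restrict_grid get_row -/r.
rewrite size_take; have -> : (if n < size r then n else size r) = n by case: ifP => //; lia.
case: (ltnP p n) => pn.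
  have -> : p < size r by lia.
  rewrite nth_take //.
  by have := before_find 0 pn; rewrite -/n => /negbT; rewrite -leqNgt => ->.
case: ifP => // ps.
have hs : has (fun y => k < y) r by rewrite has_find; lia.
have := nth_find 0 hs; rewrite -/n => hn.
have : nth 0 r n <= nth 0 r p.
  case: (ltngtP n p) pn => // [np|->] _ //.
  by apply: ltnW; apply: (@sorted_ltn_nth _ _ ltn_trans 0 r so n p); rewrite ?inE //; lia.
by move=> h; have -> : (nth 0 r p <= k) = false by lia.
Qed.

Definition column (T : tableau) j :=
  pmap (fun i => omap (fun v => (i, v)) (get T i j)) (iota 0 (size T)).

Lemma none_from (g : nat -> option nat) a b :
  (forall a, g a.+1 <> None -> g a <> None) -> g a = None -> a <= b -> g b = None.
Proof.
move=> dc ga; elim: b => [|b IH] ab; first by move: ga; have -> : a = 0 by lia.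
case: (ltngtP a b.+1) ab => // [lt|<-] _ //.
case E: (g b.+1) => [v|] //; exfalso; apply: (dc b); first by rewrite E.
by apply: IH; lia.
Qed.

Lemma pmap_iota_prefix (g : nat -> option nat) n :
  (forall a, g a.+1 <> None -> g a <> None) ->
  exists h, [/\ h <= n,
    pmap (fun a => omap (fun v => (a, v)) (g a)) (iota 0 n) =
      [seq (a, odflt 0 (g a)) | a <- iota 0 h],
    (forall a, a < h -> g a <> None) & (h < n -> g h = None)].
Proof.
move=> dc; elim: n => [|n [h [hn e all hl]]]; first by exists 0; split.
rewrite -addn1 iotaD pmap_cat e /= add0n.
case: (ltngtP h n) hn => // [lt|eq] _.
  have gn : g n = None by apply: (none_from dc (hl lt)); lia.
  by exists h; rewrite gn /= cats0; split => //; [lia | move=> _; exact: hl].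
subst h; case E: (g n) => [v|] /=; last by exists n; rewrite cats0; split => //; lia.
exists n.+1; split => //.
- by rewrite addn1.
- by rewrite -addn1 iotaD map_cat /= E.
- move=> a alt; case: (ltnP a n) => lt; first exact: all.
  by rewrite (_ : a = n) ?E //; lia.
- lia.
Qed.

Lemma column_spec T j : valid T ->
  (forall a, a < size (column T j) ->
     (nth (0,0) (column T j) a).1 = a /\ get T a j = Some (nth (0,0) (column T j) a).2) /\
  (forall a, size (column T j) <= a -> get T a j = None).
Proof.
move=> /validP [ne co ic].
have dc a : get T a.+1 j <> None -> get T a j <> None by apply: co.
have [h [hn e all hl]] := pmap_iota_prefix (size T) dc.
have ec : column T j = [seq (a, odflt 0 (get T a j)) | a <- iota 0 h] by rewrite /column e.
have sc : size (column T j) = h by rewrite ec size_map size_iota.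
have gh : get T h j = None.
  by case: (ltngtP h (size T)) hn => // [lt|->] _; [exact: hl | exact: get_default].
split => a; rewrite sc => ah; last exact: (none_from dc gh).
rewrite ec (nth_map 0) ?size_iota // nth_iota //=.
by split => //; case E: (get T a j) (all a ah) => [v|].
Qed.

Lemma column_end T j : valid T ->
  (if column T j is [::] then 0 else (last (0, 0) (column T j)).1.+1) = size (column T j).
Proof.
move=> vT; have [cn _] := column_spec j vT.
move: cn; case: (column T j) => [|p c] // cn.
by rewrite -nth_last; have [-> _] := cn (size (p :: c)).-1 ltac:(by []).
Qed.

Lemma column_restrict k T TR j : valid T -> valid TR ->
  get TR =2 restrict_grid k (get T) ->
  column TR j = take (find (fun p : nat * nat => k < p.2) (column T j)) (column T j).
Proof.
move=> vT vTR rel.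
have [cn cb] := column_spec j vT; have [rn rb] := column_spec j vTR.
set c := column T j in cn cb *; set cR := column TR j in rn rb *.
set n := find _ c.
have gR a v : get TR a j = Some v -> get T a j = Some v /\ v <= k.
  by rewrite rel /restrict_grid; case: (get T a j) => // u; case: ifP => // uk [<-].
have e : size cR = n.
  apply/eqP; rewrite eqn_leq; apply/andP; split.
    case: (ltnP n (size cR)) => // lt; exfalso.
    have [_ /gR [g2 vk]] := rn n lt.
    have nc : n < size c by case: (ltnP n (size c)) => // /cb; rewrite g2.
    have hs : has (fun p : nat * nat => k < p.2) c by rewrite has_find.
    have [_] := cn n nc; have := nth_find (0,0) hs; rewrite -/n g2 => kv [eq].
    lia.
  case: (ltnP (size cR) n) => // lt; exfalso.
  have [_ g3] := cn (size cR) ltac:(have := find_size (fun p : nat * nat => k < p.2) c; lia).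
  have := before_find (0,0) lt; rewrite -/n => /negbT; rewrite -leqNgt => vk.
  by have := rb (size cR) (leqnn _); rewrite rel /restrict_grid g3 vk.
apply: (eq_from_nth (x0 := (0,0))); first by rewrite e size_takel // find_size.
move=> a; rewrite e => an; rewrite nth_take //.
have [r1 /gR [r2 _]] := rn a ltac:(lia).
have [c1 c2] := cn a ltac:(have := find_size (fun p : nat * nat => k < p.2) c; lia).
move: r1 r2 c1 c2; case: (nth (0,0) cR a) => a1 v1; case: (nth (0,0) c a) => a2 v2 /=.
by move=> -> -> -> -[->].
Qed.

(** * Insertion *)

Definition line (T : tableau) (t : target) : seq nat :=
  match t with InRow i => row T i | InCol j => map snd (column T j) end.

Definition line_box (t : target) (p : nat) : nat * nat :=
  match t with InRow i => (i, i + p) | InCol j => (p, j) end.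

(* In a row, p = 0 is the diagonal box, whose bumped letter goes to the next column. *)
Definition line_next (t : target) (p : nat) : target :=
  match t with InRow i => if p == 0 then InCol i.+1 else InRow i.+1 | InCol j => InCol j.+1 end.

Lemma hstep_lineE f T t x : valid T ->
  hstep f.+1 T t x =
  if all (fun y => y <= x) (line T t) then
    try_set_box T (line_box t (size (line T t))).1 (line_box t (size (line T t))).2 x
  else hstep f (try_set_box T (line_box t (find (fun y => x < y) (line T t))).1
                              (line_box t (find (fun y => x < y) (line T t))).2 x)
         (line_next t (find (fun y => x < y) (line T t)))
         (nth 0 (line T t) (find (fun y => x < y) (line T t))).
Proof.
move=> vT; case: t => [i|j] /=; first by rewrite -[X in _ == X]addn0 eqn_add2l.
rewrite all_map find_map size_map -(column_end j vT); case: ifP => // /negbT na.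
have [cn _] := column_spec j vT.
have lt : find (preim snd (fun y => x < y)) (column T j) < size (column T j).
  by rewrite -has_find; apply/hasP; move/allPn: na => [p pin h]; exists p => //=; lia.
by rewrite (nth_map (0, 0)) // (cn _ lt).1.
Qed.

Lemma get_line T t p : valid T ->
  get T (line_box t p).1 (line_box t p).2 = onth (line T t) p.
Proof.
move=> vT; rewrite (onth_if 0); case: t => [i|j] /=; first exact: get_row.
have [cn cb] := column_spec j vT; rewrite size_map.
case: ltnP => [lt | /cb //]; by rewrite (nth_map (0, 0)) // (cn _ lt).2.
Qed.

Lemma find_gt_bump (s : seq nat) x : ~~ all (fun y => y <= x) s ->
  find (fun y => x < y) s < size s /\ x < nth 0 s (find (fun y => x < y) s).
Proof.
move=> na; have hs : has (fun y => x < y) s.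
  by apply/hasP; move/allPn: na => [a ain h]; exists a => //; lia.
by rewrite -has_find; split => //; apply: nth_find.
Qed.

Lemma line_restrict k T TR t : valid T -> valid TR ->
  get TR =2 restrict_grid k (get T) ->
  line TR t = take (find (fun y => k < y) (line T t)) (line T t).
Proof.
move=> vT vTR rel; case: t => [i|j] /=; first exact: row_restrict.
by rewrite (column_restrict j vT vTR rel) map_take find_map.
Qed.

Lemma valid_hstep f T t x : valid T -> valid (hstep f T t x).
Proof.
elim: f T t x => [|f IH] T t x vT //; rewrite hstep_lineE //.
by case: ifP => _; [apply: valid_try_set_box | apply/IH/valid_try_set_box].
Qed.

Lemma positive_hstep f T t x : valid T -> positive T -> 0 < x -> positive (hstep f T t x).
Proof.
elim: f T t x => [|f IH] T t x vT pT x0 //; rewrite hstep_lineE //.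
case: ifP => na; first exact: positive_try_set_box.
have [lt _] := find_gt_bump (negbT na).
have := get_line t (find (fun y => x < y) (line T t)) vT; rewrite (onth_if 0) lt => g.
by apply: IH; [apply: valid_try_set_box | apply: positive_try_set_box | apply: pT g].
Qed.

Lemma restrict_hstep_large k f T t x : valid T -> k < x ->
  restrict_grid k (get (hstep f T t x)) =2 restrict_grid k (get T).
Proof.
elim: f T t x => [|f IH] T t x vT kx //; rewrite hstep_lineE //.
case: ifP => na.
  by apply: restrict_try_set_box_large => // w; rewrite get_line // onth_default.
have [lt xl] := find_gt_bump (negbT na).
move=> a b; rewrite IH ?valid_try_set_box //; last lia.
by apply: restrict_try_set_box_large => // w; rewrite get_line // (onth_if 0) lt => -[<-]; lia.
Qed.

(* Each bump moves to the next row or column: at most size T rows, then at most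
   size (row T 0) columns. *)
Definition fuel_needed (T : tableau) t :=
  match t with
  | InRow i => size T - i + size (row T 0) + 2
  | InCol j => size (row T 0) - j + 1
  end.

Lemma fuel_needed_bump T t p v : valid T -> p < size (line T t) ->
  fuel_needed (try_set_box T (line_box t p).1 (line_box t p).2 v) (line_next t p) <
  fuel_needed T t.
Proof.
move=> vT lt; have := get_line t p vT; rewrite (onth_if 0) lt => g.
have [sT sT0] := @shape_try_set_box T (line_box t p).1 (line_box t p).2 v ltac:(by rewrite g).
rewrite /fuel_needed sT0; set r0 := size (row T 0); case: t lt g sT {sT0} => [i|j] /= lt g sT.
  by rewrite sT; have := @get_size T i (i + p); rewrite g => /(_ ltac:(by [])); case: eqP; lia.
have [cn _] := column_spec j vT; move: lt; rewrite size_map => lt.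
have [_ g0] := cn 0 ltac:(lia).
have [_] := @get_defined T 0 j ltac:(by rewrite g0).
rewrite subn0 -/r0; lia.
Qed.

Lemma restrict_hstep_small k fR : forall f T TR t x,
  valid T -> valid TR -> get TR =2 restrict_grid k (get T) -> x <= k ->
  fuel_needed TR t <= fR -> fuel_needed T t <= f ->
  get (hstep fR TR t x) =2 restrict_grid k (get (hstep f T t x)).
Proof.
elim: fR => [|fR IH] [|f] T TR t x vT vTR rel xk nR nT; try by case: t nR nT => /=; lia.
rewrite !hstep_lineE // (line_restrict t vT vTR rel).
set l := line T t; set n := find _ l.
case all_le: (all (fun y => y <= x) l).
  rewrite (prefix_all_le xk all_le) all_le.
  by apply: restrict_try_set_box => //; rewrite get_line // onth_default.
have [lt xl] := find_gt_bump (negbT all_le).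
have gp := get_line t (find (fun y => x < y) l) vT; rewrite (onth_if 0) lt in gp.
case pre_le: (all (fun y => y <= x) (take n l)).
  (* T|_[k] appends x in the box where T bumps a letter larger than k. *)
  have [e1 e2] := bump_after_prefix xk (negbT all_le) pre_le.
  rewrite e1 in gp xl *; move=> a b; rewrite restrict_hstep_large ?valid_try_set_box //.
  by apply: restrict_try_set_box => //; rewrite gp.
have [e1 e2] := bump_in_prefix xk (negbT pre_le); rewrite e2 e1.
have [ltR _] := find_gt_bump (negbT pre_le); rewrite e1 in ltR.
have pn : find (fun y => x < y) l < n.
  by apply: leq_trans ltR _; rewrite size_take_min geq_minl.
rewrite -(line_restrict t vT vTR rel) in ltR.
apply: IH.
- exact: valid_try_set_box.
- exact: valid_try_set_box.
- by apply: restrict_try_set_box => //; rewrite gp.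
- by rewrite leqNgt (before_find 0 pn).
- by have := fuel_needed_bump x vTR ltR; lia.
- by have := fuel_needed_bump x vT lt; lia.
Qed.

Lemma size_le_sumn (T : tableau) : rows_nonempty T -> size T <= sumn (map size T).
Proof.
elim: T => [|r T IH] //= ne.
have := ne 0 (ltn0Sn _); rewrite /row /= => h.
suff : size T <= sumn (map size T) by lia.
by apply: IH => a aT; apply: (ne a.+1).
Qed.

Lemma fuel_needed_insert T : valid T ->
  fuel_needed T (InRow 0) <= 2 * sumn (map size T) + 5.
Proof.
move=> /validP [ne _ _]; rewrite /fuel_needed.
have := size_le_sumn ne.
have : size (row T 0) <= sumn (map size T) by case: T {ne} => [|r T] //=; rewrite /row /=; lia.
lia.
Qed.

Lemma restrict_insert_small k T TR x :
  valid T -> valid TR -> get TR =2 restrict_grid k (get T) -> x <= k ->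
  get (hecke_insert TR x) =2 restrict_grid k (get (hecke_insert T x)).
Proof. by move=> vT vTR rel xk; apply: restrict_hstep_small; rewrite ?fuel_needed_insert. Qed.

Lemma valid_positive_foldl T w : valid T -> positive T -> all (fun a => 0 < a) w ->
  valid (foldl hecke_insert T w) /\ positive (foldl hecke_insert T w).
Proof.
elim: w T => [|a w IH] T vT pT //= /andP [a0 aw].
by apply: IH => //; [apply: valid_hstep | apply: positive_hstep].
Qed.

Lemma restrict_foldl k w T TR : valid T -> valid TR ->
  get TR =2 restrict_grid k (get T) ->
  get (foldl hecke_insert TR (restrict_word w k)) =2
  restrict_grid k (get (foldl hecke_insert T w)).
Proof.
elim: w T TR => [|c w IH] T TR vT vTR rel //.
rewrite /restrict_word /=; case: ifP => ck /=.
  apply: IH => //; try exact: valid_hstep.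
  exact: restrict_insert_small.
apply: IH => //; first exact: valid_hstep.
by move=> a b; rewrite rel restrict_hstep_large //; lia.
Qed.

Theorem lemma2 (w : seq nat) (k : nat) :
  all (fun a => 0 < a) w -> 1 <= k ->
  forall i j : nat, get (P (restrict_word w k)) i j = restrict_get (P w) k i j.
Proof.
move=> pw _ i j.
have v0 : valid [::] by [].
have p0 : positive [::] by move=> a b v; rewrite get_default.
have rel0 : get [::] =2 restrict_grid k (get [::]).
  by move=> a b; rewrite /restrict_grid get_default.
have [_ pos] := valid_positive_foldl v0 p0 pw.
rewrite /P (restrict_foldl w v0 v0 rel0) /restrict_grid /restrict_get.
by case E: (get (foldl hecke_insert [::] w) i j) => [v|] //; rewrite (pos _ _ _ E).
Qed.
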